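(* For every join query $\mathcal R$, the MO bound $\sum_{c\in\mathcal C_2}\mathrm{IN}^{\mathsf{MO}(\mathcal R(c))}$ is $O(\mathsf{AGM}(\mathcal R))$, where the hidden factor depends only on the query schema (number of relations and attributes) and is at most polylogarithmic in $\mathrm{IN}$, but does not otherwise depend on the tuples.
   Context: A join query consists of a finite set $\mathcal R$ of relations; each $R$ is a finite set of tuples over attribute set $\mathsf{attr}(R)$; $\mathcal A=\bigcup_R\mathsf{attr}(R)$. $\mathrm{IN}=\sum_{R\in\mathcal R}|R|\ge 2$ (always the input size of the original query), and $\log$ denotes $\log_{\mathrm{IN}}$. For a relation $S$, $A\subseteq\mathsf{attr}(S)$ and $v\in\pi_A(S)$: $\mathsf{deg}(v,S,A)=|\{t\in S:\pi_A(t)=v\}|$; $d_{S,A}=\max_{v\in\pi_A(S)}\mathsf{deg}(v,S,A)$ for $A\neq\emptyset$, $d_{S,\emptyset}=|S|$; for $A\subseteq B\subseteq\mathsf{attr}(S)$, $d(A,B,S)=\log d_{\pi_B(S),A}$. Degree configurations: for $L>1$, buckets $B_l=[L^l,L^{l+1})$, $l\in\mathbb N$, ordered by index. A degree configuration $c$ maps each $(R,A)$ with $R\in\mathcal R$, $A\subseteq\mathsf{attr}(R)$ to a bucket $c(R,A)$ with $A'\subseteq A\Rightarrow c(R,A)\le c(R,A')$, $c(R,\mathsf{attr}(R))=B_0$, $c(R,\emptyset)=B_{\lfloor\log_L|R|\rfloor}$; $\mathcal C_L$ is the set of these. $R(c)=\{t\in R:\forall A\subseteq\mathsf{attr}(R),\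 \mathsf{deg}(\pi_A(t),R,A)\in c(R,A)\}$ and $\mathcal R(c)=\{R(c):R\in\mathcal R\}$. For a set $\mathcal S$ of (nonempty) relations with attribute set $\mathcal A$, the MO program has variables $s_F$ ($F\subseteq\mathcal A$) and constraints $s_\emptyset=0$; $s_F\le s_{F'}$ for $F\subseteq F'$; $s_{B\cup E}\le s_{A\cup E}+d(A,B,S)$ for all $S\in\mathcal S$, $E\subseteq\mathcal A$, $A\subseteq B\subseteq\mathsf{attr}(S)$; $\mathsf{MO}(\mathcal S)$ is the maximum of $s_{\mathcal A}$ (degrees computed in the relations of $\mathcal S$). (Configurations $c$ with some $R(c)=\emptyset$ contribute nothing to the join and may be omitted from the sum.) AGM bound: $\mathsf{AGM}(\mathcal S)=\mathrm{IN}^{\rho^*}$ where $\rho^*=\min\sum_{S\in\mathcal S}w_S\log|S|$ over $w_S\ge0$ with $\sum_{S:a\in\mathsf{attr}(S)}w_S\ge1$ for every attribute $a$. *)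

From Stdlib Require Import Reals ClassicalEpsilon.
From HB Require Import structures.
From mathcomp Require Import all_boot.
Set Implicit Arguments. Unset Strict Implicit. Unset Printing Implicit Defensive.
Local Open Scope R_scope.

(* Attributes are 'I_n.  A tuple is a finite map from attributes to values;
   a tuple over attribute set X has value [Some _] exactly on X. *)
Definition tup (V : finType) (n : nat) := {ffun 'I_n -> option V}.

Definition proj (V : finType) (n : nat) (A : {set 'I_n}) (t : tup V n) : tup V n :=
  [ffun a => if a \in A then t a else None].

Definition proj_rel (V : finType) (n : nat) (A : {set 'I_n}) (S : {set tup V n})
  : {set tup V n} := [set proj A t | t in S].

Definition deg (V : finType) (n : nat) (v : tup V n) (S : {set tup V n})
  (A : {set 'I_n}) : nat := #|[set t in S | proj A t == v]|.

Definition dmax (V : finType) (n : nat) (S : {set tup V n}) (A : {set 'I_n}) : nat :=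
  if A == set0 then #|S| else \max_(v in proj_rel A S) deg v S A.

Definition logIN (IN x : nat) : R := Rdiv (ln (INR x)) (ln (INR IN)).

Definition dlog (IN : nat) (V : finType) (n : nat) (A B : {set 'I_n})
  (S : {set tup V n}) : R := logIN IN (dmax (proj_rel B S) A).

Definition wf_query (V : finType) (k n : nat) (attr : 'I_k -> {set 'I_n})
  (rel : 'I_k -> {set tup V n}) : Prop :=
  (forall i t, t \in rel i -> forall a, (t a != None) = (a \in attr i)) /\
  (forall a : 'I_n, exists i, a \in attr i).

Definition IN (V : finType) (k n : nat) (rel : 'I_k -> {set tup V n}) : nat :=
  \sum_(i < k) #|rel i|.

Definition is_glb (E : R -> Prop) (m : R) : Prop :=
  (forall x, E x -> (m <= x)) /\ (forall b, (forall x, E x -> (b <= x)) -> (b <= m)).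

Definition MO_feasible (INv : nat) (V : finType) (k n : nat) (attr : 'I_k -> {set 'I_n})
  (S : 'I_k -> {set tup V n}) (s : {set 'I_n} -> R) : Prop :=
  s set0 = 0 /\
  (forall F F' : {set 'I_n}, F \subset F' -> (s F <= s F')) /\
  (forall (i : 'I_k) (E A B : {set 'I_n}), A \subset B -> B \subset attr i ->
     (s (B :|: E) <= s (A :|: E) + dlog INv A B (S i))).

Definition MO (INv : nat) (V : finType) (k n : nat) (attr : 'I_k -> {set 'I_n})
  (S : 'I_k -> {set tup V n}) : R :=
  epsilon (inhabits 0)
    (fun m => is_lub (fun x => exists s, MO_feasible INv attr S s /\ x = s setT) m).

Definition rho_star (V : finType) (k n : nat) (attr : 'I_k -> {set 'I_n})
  (rel : 'I_k -> {set tup V n}) : R :=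
  epsilon (inhabits 0)
    (fun m => is_glb (fun x => exists w : 'I_k -> R,
        (forall i, (0 <= w i)) /\
        (forall a : 'I_n, (1 <= \big[Rplus/0]_(i | a \in attr i) w i)) /\
        x = \big[Rplus/0]_(i < k) (w i * logIN (IN rel) #|rel i|)) m).

Definition AGM (V : finType) (k n : nat) (attr : 'I_k -> {set 'I_n})
  (rel : 'I_k -> {set tup V n}) : R :=
  Rpower (INR (IN rel)) (rho_star attr rel).

(* Degree configurations for L = 2: c (i, A) = l means bucket [2^l, 2^(l+1)).
   Bucket indices never exceed floor(log2 IN) <= IN, so 'I_(IN+1) suffices;
   entries for A not a subset of attr i are fixed to 0 (unused). *)
Definition config (V : finType) (k n : nat) (rel : 'I_k -> {set tup V n}) :=
  {ffun 'I_k * {set 'I_n} -> 'I_(IN rel).+1}.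

Definition is_config (V : finType) (k n : nat) (attr : 'I_k -> {set 'I_n})
  (rel : 'I_k -> {set tup V n}) (c : config rel) : bool :=
  [forall i : 'I_k,
    [&& nat_of_ord (c (i, attr i)) == 0%N,
        nat_of_ord (c (i, set0)) == trunc_log 2 #|rel i|,
        [forall A : {set 'I_n}, (A \subset attr i) || (nat_of_ord (c (i, A)) == 0%N)] &
        [forall A : {set 'I_n}, forall A' : {set 'I_n},
           ((A' \subset A) && (A \subset attr i)) ==> (c (i, A) <= c (i, A'))%N]]].

Definition restrict (V : finType) (k n : nat) (attr : 'I_k -> {set 'I_n})
  (rel : 'I_k -> {set tup V n}) (c : config rel) (i : 'I_k) : {set tup V n} :=
  [set t in rel i | [forall A : {set 'I_n}, (A \subset attr i) ==>
      ((2 ^ c (i, A) <= deg (proj A t) (rel i) A) && (deg (proj A t) (rel i) A < 2 ^ (c (i, A)).+1))%N]].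

Definition MO_bound (V : finType) (k n : nat) (attr : 'I_k -> {set 'I_n})
  (rel : 'I_k -> {set tup V n}) : R :=
  \big[Rplus/0]_(c : config rel | is_config attr c && [forall i, restrict attr c i != set0])
     Rpower (INR (IN rel)) (MO (IN rel) attr (restrict attr c)).

(* Inside one degree configuration c every degree of R_i(c) is known up to a
   factor 2, so d(A, B, R_i(c)) <= (c(i,A) - c(i,B) + 1) log 2.  Adding the
   attributes one at a time and charging each step to a fractional edge cover w
   (truncated at 1) bounds every feasible MO solution by
   sum_i w_i log |R_i| + k n log 2, hence IN^MO(R(c)) <= 2^(kn) AGM(R).  Bucket
   indices are at most log_2 IN, so there are at most (log_2 IN + 1)^(k 2^n)
   configurations, which is the polylogarithmic factor. *)

From Stdlib Require Import Reals Lra Lia ClassicalEpsilon.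
From HB Require Import structures.
From mathcomp Require Import all_boot.
Set Implicit Arguments. Unset Strict Implicit. Unset Printing Implicit Defensive.
Local Open Scope R_scope.

Lemma RplusA : associative Rplus.
Proof. by move=> x y z; rewrite Rplus_assoc. Qed.

HB.instance Definition _ := Monoid.isComLaw.Build R 0 Rplus RplusA Rplus_comm Rplus_0_l.
HB.instance Definition _ := Monoid.isMulLaw.Build R 0 Rmult Rmult_0_l Rmult_0_r.
HB.instance Definition _ :=
  Monoid.isAddLaw.Build R Rmult Rplus Rmult_plus_distr_r Rmult_plus_distr_l.

Lemma sumR_le (I : Type) (r : seq I) (P : pred I) (F G : I -> R) :
  (forall i, P i -> F i <= G i) ->
  \big[Rplus/0]_(i <- r | P i) F i <= \big[Rplus/0]_(i <- r | P i) G i.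
Proof. by move=> FG; apply: (big_ind2 (fun x y => x <= y)) => // *; lra. Qed.

Lemma sumR_ge0 (I : Type) (r : seq I) (P : pred I) (F : I -> R) :
  (forall i, P i -> 0 <= F i) -> 0 <= \big[Rplus/0]_(i <- r | P i) F i.
Proof. by move=> F0; apply: (big_ind (fun x => 0 <= x)) => // *; lra. Qed.

Lemma sumR_const (I : finType) (P : pred I) (a : R) :
  \big[Rplus/0]_(i | P i) a = INR #|P| * a.
Proof.
rewrite big_const; elim: #|P| => [|m IH]; first by rewrite /=; lra.
by rewrite iterS IH S_INR; lra.
Qed.

Lemma sumR_Rmin1_ge1 (I : Type) (r : seq I) (P : pred I) (w : I -> R) :
  (forall i, 0 <= w i) -> 1 <= \big[Rplus/0]_(i <- r | P i) w i ->
  1 <= \big[Rplus/0]_(i <- r | P i) Rmin (w i) 1.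
Proof.
move=> w0 cover.
have [_] : 0 <= \big[Rplus/0]_(i <- r | P i) w i /\
    Rmin (\big[Rplus/0]_(i <- r | P i) w i) 1 <= \big[Rplus/0]_(i <- r | P i) Rmin (w i) 1.
  apply: (big_ind2 (fun x y => 0 <= x /\ Rmin x 1 <= y)).
  - by rewrite Rmin_left; lra.
  - move=> x1 y1 x2 y2 [x1_ge0 le1] [x2_ge0 le2]; split; first lra.
    by move: le1 le2; rewrite /Rmin; do 3 case: Rle_dec; lra.
  - by move=> i _; split; [apply: w0 | lra].
by rewrite Rmin_right.
Qed.

Lemma ln_le x y : 0 < x -> x <= y -> ln x <= ln y.
Proof. by move=> x_gt0 [lt_xy | ->]; [left; apply: ln_increasing | right]. Qed.

Lemma ln_0 : ln 0 = 0.
Proof. by rewrite /ln; case: Rlt_dec => // lt00; case: (Rlt_irrefl 0). Qed.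

Lemma ln_INR_ge0 m : 0 <= ln (INR m).
Proof.
case: m => [|m]; first by rewrite /= ln_0; lra.
by rewrite -ln_1; apply: ln_le; [lra | apply: (le_INR 1); lia].
Qed.

Lemma ln_INR_le m M : (m <= M)%N -> ln (INR m) <= ln (INR M).
Proof.
case: m => [_|m /leP le_mM]; first by rewrite /= ln_0; apply: ln_INR_ge0.
by apply: ln_le; [apply: lt_0_INR; lia | apply: le_INR].
Qed.

Lemma ln_INR_gt0 N : (1 < N)%N -> 0 < ln (INR N).
Proof.
move=> /leP N_gt1; rewrite -ln_1; apply: ln_increasing; first lra.
by apply: (lt_INR 1).
Qed.

Lemma INR_expn a m : INR (a ^ m) = INR a ^ m.
Proof. by elim: m => [|m IH]; rewrite ?expn0 // expnS -multE mult_INR IH. Qed.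

Section LogBaseIN.
Variable N : nat.
Hypothesis N_gt1 : (1 < N)%N.

Lemma logIN_ge0 x : 0 <= logIN N x.
Proof.
rewrite /logIN /Rdiv; apply: Rmult_le_pos; first exact: ln_INR_ge0.
by apply/Rlt_le/Rinv_0_lt_compat/ln_INR_gt0.
Qed.

Lemma logIN_le x y : (x <= y)%N -> logIN N x <= logIN N y.
Proof.
move=> le_xy; apply: Rmult_le_compat_r; last exact: ln_INR_le.
by apply/Rlt_le/Rinv_0_lt_compat/ln_INR_gt0.
Qed.

Lemma logIN_expn b m : (0 < b)%N -> logIN N (b ^ m) = INR m * logIN N b.
Proof.
move=> /leP b_gt0; rewrite /logIN INR_expn ln_pow; first by rewrite /Rdiv Rmult_assoc.
exact: lt_0_INR.
Qed.

Lemma trunc_log_logIN x : INR (trunc_log 2 x) * logIN N 2 <= logIN N x.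
Proof.
case: x => [|x]; first by rewrite trunc_log0 Rmult_0_l; apply: logIN_ge0.
by rewrite -logIN_expn //; apply/logIN_le/trunc_logP.
Qed.

Lemma Rpower_logIN y b : (0 < b)%N -> Rpower (INR N) (y * logIN N b) = Rpower (INR b) y.
Proof.
move=> b_gt0; have := ln_INR_gt0 N_gt1.
by rewrite /Rpower /logIN => lnN_gt0; congr exp; field; lra.
Qed.

Lemma INR_trunc_log2_succ_le : INR (trunc_log 2 N).+1 <= 2 / ln 2 * ln (INR N).
Proof.
have ln2_gt0 : 0 < ln 2 by rewrite -ln_1; apply: ln_increasing; lra.
have T_ge1 : 1 <= INR (trunc_log 2 N).
  by apply: (le_INR 1); apply/leP/trunc_log_max; rewrite ?expn1.
have T_ln2 : INR (trunc_log 2 N) * ln 2 <= ln (INR N).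
  have := ln_INR_le (trunc_logP (isT : (1 < 2)%N) (ltnW N_gt1)).
  by rewrite INR_expn (_ : INR 2 = 2) ?ln_pow //=; lra.
have T_le : INR (trunc_log 2 N) <= ln (INR N) / ln 2.
  by apply: (Rmult_le_reg_r (ln 2)) => //; rewrite /Rdiv Rmult_assoc Rinv_l; lra.
rewrite S_INR (_ : 2 / ln 2 * ln (INR N) = 2 * (ln (INR N) / ln 2)); last by rewrite /Rdiv; ring.
lra.
Qed.

End LogBaseIN.

Definition prefix n (j : nat) : {set 'I_n} := [set a : 'I_n | (a < j)%N].

Section ChainBound.
Variables (k n : nat) (attr : 'I_k -> {set 'I_n}) (s : {set 'I_n} -> R).
Variables (f : 'I_k -> {set 'I_n} -> R) (u : 'I_k -> R).
Hypothesis s0 : s set0 = 0.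
Hypothesis s_mono : forall F F' : {set 'I_n}, F \subset F' -> s F <= s F'.
Hypothesis s_step : forall i (E A : {set 'I_n}) (a : 'I_n),
  a \notin A -> a \in attr i -> A \subset attr i ->
  s (a |: A :|: E) <= s (A :|: E) + (f i (a |: A) - f i A).
Hypothesis u_ge0 : forall i, 0 <= u i.
Hypothesis u_cover : forall a : 'I_n, 1 <= \big[Rplus/0]_(i | a \in attr i) u i.

(* Attributes are added one at a time; the step adding a is paid for by the
   relations containing a, whose weights u cover a. *)
Lemma chain_bound_prefix j : (j <= n)%N ->
  s (prefix n j) <= \big[Rplus/0]_(i < k) (u i * (f i (attr i :&: prefix n j) - f i set0)).
Proof.
elim: j => [_|j IH lt_jn].
  have -> : prefix n 0 = set0 by apply/setP => a; rewrite !inE ltn0.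
  rewrite s0; apply: sumR_ge0 => i _; rewrite setI0; lra.
pose a : 'I_n := Ordinal lt_jn.
set P := prefix n j.
have aP : a \notin P by rewrite inE ltnn.
have PS : prefix n j.+1 = a |: P by apply/setP => x; rewrite !inE ltnS leq_eqVlt.
pose delta := s (a |: P) - s P.
have delta_ge0 : 0 <= delta by have := s_mono (subsetUr [set a] P); rewrite /delta; lra.
pose X i := f i (attr i :&: (a |: P)) - f i (attr i :&: P).
have X_out i : a \notin attr i -> X i = 0.
  move=> a_out; rewrite /X.
  have -> : attr i :&: (a |: P) = attr i :&: P.
    by apply/setP => x; rewrite !inE; case: (x =P a) => // ->; rewrite (negbTE a_out).
  lra.
have X_in i : a \in attr i -> delta <= X i.
  move=> a_in; set A := attr i :&: P.
  have hB : attr i :&: (a |: P) = a |: A by rewrite setIUr (setIidPr _) ?sub1set.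
  have aA : a \notin A by rewrite inE negb_and aP orbT.
  have := s_step P aA a_in (subsetIl _ P).
  by rewrite /X hB -setUA (setUidPr (subsetIr _ _)) -/A /delta; lra.
suff : delta <= \big[Rplus/0]_(i < k) (u i * X i).
  have := IH (ltnW lt_jn); rewrite PS -/P.
  have -> : \big[Rplus/0]_(i < k) (u i * (f i (attr i :&: (a |: P)) - f i set0)) =
      \big[Rplus/0]_(i < k) (u i * (f i (attr i :&: P) - f i set0)) +
      \big[Rplus/0]_(i < k) (u i * X i).
    by rewrite -big_split; apply: eq_bigr => i _; rewrite /X /=; ring.
  rewrite /delta; lra.
rewrite (bigID (fun i => a \in attr i)) /=.
rewrite [X in _ + X]big1 ?Rplus_0_r => [|i /X_out ->]; last lra.
apply: Rle_trans (_ : \big[Rplus/0]_(i | a \in attr i) (u i * delta) <= _); last first.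
  by apply: sumR_le => i a_in; apply: Rmult_le_compat_l; [apply: u_ge0 | apply: X_in].
rewrite -big_distrl /=.
apply: Rle_trans (_ : 1 * delta <= _); first lra.
by apply: Rmult_le_compat_r; last exact: u_cover.
Qed.

Lemma chain_bound :
  s setT <= \big[Rplus/0]_(i < k) (u i * (f i (attr i) - f i set0)).
Proof.
have prefix_n : prefix n n = setT by apply/setP => a; rewrite !inE ltn_ord.
have := chain_bound_prefix (leqnn n); rewrite prefix_n.
by under eq_bigr => i _ do rewrite setIT.
Qed.
End ChainBound.

Lemma proj_proj (V : finType) n (A B : {set 'I_n}) (t : tup V n) :
  A \subset B -> proj A (proj B t) = proj A t.
Proof.
move=> AB; apply/ffunP => a; rewrite !ffunE.
by case: ifP => // aA; rewrite (subsetP AB a aA).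
Qed.

Lemma card_rel_le_IN (V : finType) k n (rel : 'I_k -> {set tup V n}) i :
  (#|rel i| <= IN rel)%N.
Proof. by rewrite /IN (bigD1 i) //= leq_addr. Qed.

Section DegreeConfiguration.
Variables (V : finType) (k n : nat) (attr : 'I_k -> {set 'I_n}).
Variables (rel : 'I_k -> {set tup V n}) (c : config rel).
Hypothesis c_config : is_config attr c.

Let c_configP i := and4P (forallP c_config i).

Lemma config_attr i : c (i, attr i) = 0%N :> nat.
Proof. by have [/eqP] := c_configP i. Qed.

Lemma config_set0 i : c (i, set0) = trunc_log 2 #|rel i| :> nat.
Proof. by have [_ /eqP] := c_configP i. Qed.

Lemma config_antimono i (A B : {set 'I_n}) :
  A \subset B -> B \subset attr i -> (c (i, B) <= c (i, A))%N.
Proof.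
move=> AB Bat; have [_ _ _ /forallP/(_ B)/forallP/(_ A)/implyP] := c_configP i.
by apply; rewrite AB Bat.
Qed.

Lemma config_le_trunc_log x : (c x <= trunc_log 2 (IN rel))%N.
Proof.
case: x => i A; have [_ _ /forallP/(_ A) /orP[Aat | /eqP -> //] _] := c_configP i.
rewrite (leq_trans (config_antimono (sub0set A) Aat)) // config_set0.
exact/leq_trunc_log/card_rel_le_IN.
Qed.

Lemma restrict_deg i t (C : {set 'I_n}) :
  t \in restrict attr c i -> C \subset attr i ->
  (2 ^ c (i, C) <= deg (proj C t) (rel i) C < 2 ^ (c (i, C)).+1)%N.
Proof. by rewrite inE => /andP[_ /forallP/(_ C)] /implyP + Cat; apply. Qed.

(* Every u in the fibre is the B-projection of at least 2^c(i,B) tuples of rel i,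
   all with A-projection v, and fewer than 2^(c(i,A)+1) tuples of rel i project to v. *)
Lemma card_fibre_restrict i (A B : {set 'I_n}) (v : tup V n) :
  A \subset B -> B \subset attr i ->
  (#|[set u in proj_rel B (restrict attr c i) | proj A u == v]| * 2 ^ c (i, B)
     <= 2 ^ (c (i, A)).+1)%N.
Proof.
move=> AB Bat; set X := [set u in _ | _].
have [-> | [u0 u0X]] := set_0Vmem X; first by rewrite cards0.
set D := [set t in rel i | proj A t == v].
have D_lt : (#|D| < 2 ^ (c (i, A)).+1)%N.
  move: u0X; rewrite inE => /andP[/imsetP[t0 t0R ->] /eqP].
  rewrite proj_proj // /D => <-.
  by have /andP[] := restrict_deg t0R (subset_trans AB Bat).
apply/ltnW/(leq_trans _ D_lt).
set Z := [set t in D | proj B t \in X].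
have ZD : Z \subset D by apply/subsetP => t; rewrite inE => /andP[].
apply: (leq_trans _ (subset_leq_card ZD)).
rewrite -[#|Z|]sum1_card (partition_big (proj B) (mem X)) => [|t]; last first.
  by rewrite inE => /andP[].
rewrite -sum_nat_const; apply: leq_sum => u uX.
move: uX; rewrite inE => /andP[/imsetP[t1 t1R ->] /eqP t1v].
have /andP[deg_ge _] := restrict_deg t1R Bat.
apply: (leq_trans deg_ge); rewrite sum1_card; apply/subset_leq_card/subsetP => t.
rewrite !inE => /andP[tR /eqP tB].
rewrite unfold_in /= !inE tR tB eqxx andbT /=.
by rewrite -(proj_proj t AB) tB t1v eqxx imset_f.
Qed.

Lemma dmax_restrict i (A B : {set 'I_n}) : A \subset B -> B \subset attr i ->
  (dmax (proj_rel B (restrict attr c i)) A <= 2 ^ ((c (i, A)).+1 - c (i, B)))%N.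
Proof.
move=> AB Bat; have cBA := config_antimono AB Bat.
have fibre_le v : (#|[set u in proj_rel B (restrict attr c i) | proj A u == v]|
                   <= 2 ^ ((c (i, A)).+1 - c (i, B)))%N.
  rewrite -(@leq_pmul2r (2 ^ c (i, B))) ?expn_gt0 // -expnD subnK ?(leq_trans cBA) //.
  exact: card_fibre_restrict.
(* For A = set0, dmax is the size of the single fibre over the empty tuple. *)
rewrite /dmax; case: eqP => [A0 | _]; last by apply/bigmax_leqP => v _; apply: fibre_le.
apply: leq_trans (fibre_le [ffun => None]); apply/subset_leq_card/subsetP => u uB.
by rewrite inE uB; apply/eqP/ffunP => a; rewrite !ffunE A0 inE.
Qed.

Lemma dlog_restrict N i (A B : {set 'I_n}) : (1 < N)%N ->
  A \subset B -> B \subset attr i ->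
  dlog N A B (restrict attr c i) <= (INR (c (i, A)) - INR (c (i, B)) + 1) * logIN N 2.
Proof.
move=> N_gt1 AB Bat; have cBA := config_antimono AB Bat.
have -> : INR (c (i, A)) - INR (c (i, B)) + 1 = INR ((c (i, A)).+1 - c (i, B)).
  by rewrite minus_INR ?S_INR; [lra | apply/leP/(leq_trans cBA)].
by rewrite -logIN_expn //; apply/logIN_le/dmax_restrict.
Qed.

Lemma MO_feasible_restrict_le N (s : {set 'I_n} -> R) (w : 'I_k -> R) :
  (1 < N)%N -> MO_feasible N attr (restrict attr c) s ->
  (forall i, 0 <= w i) -> (forall a : 'I_n, 1 <= \big[Rplus/0]_(i | a \in attr i) w i) ->
  s setT <= \big[Rplus/0]_(i < k) (w i * logIN N #|rel i|) + INR (k * n) * logIN N 2.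
Proof.
move=> N_gt1 [s0 [s_mono s_deg]] w_ge0 w_cover.
have L_ge0 := logIN_ge0 N_gt1 2.
pose f i (A : {set 'I_n}) := (INR #|A| - INR (c (i, A))) * logIN N 2.
have step i (E A : {set 'I_n}) a : a \notin A -> a \in attr i -> A \subset attr i ->
    s (a |: A :|: E) <= s (A :|: E) + (f i (a |: A) - f i A).
  move=> aA a_in Aat; have aAat : a |: A \subset attr i by rewrite subUset sub1set a_in.
  have := s_deg i E A _ (subsetUr [set a] A) aAat.
  have := dlog_restrict N_gt1 (subsetUr [set a] A) aAat.
  rewrite /f cardsU1 aA add1n S_INR; set L := logIN N 2.
  have -> : (INR #|A| + 1 - INR (c (i, a |: A))) * L - (INR #|A| - INR (c (i, A))) * L
            = (INR (c (i, A)) - INR (c (i, a |: A)) + 1) * L by ring.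
  lra.
have umin_ge0 i : 0 <= Rmin (w i) 1 by apply: Rmin_glb; [apply: w_ge0 | lra].
apply: Rle_trans
  (chain_bound s0 s_mono step umin_ge0 (fun a => sumR_Rmin1_ge1 w_ge0 (w_cover a))) _.
have -> : INR (k * n) * logIN N 2 = \big[Rplus/0]_(i < k) (INR n * logIN N 2).
  by rewrite sumR_const card_ord mult_INR; ring.
rewrite -big_split.
apply: sumR_le => i _; rewrite /f config_attr config_set0 cards0 /=.
set m := Rmin (w i) 1; set L := logIN N 2; set T := INR (trunc_log 2 #|rel i|).
set A := INR #|attr i|; set lg := logIN N #|rel i|.
have card_attr : A <= INR n.
  by apply/le_INR/leP; have := max_card (attr i); rewrite card_ord.
have attr_part : m * (A * L) <= 1 * (INR n * L).
  apply: Rmult_le_compat; [exact: umin_ge0 | | exact: Rmin_r | exact: Rmult_le_compat_r].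
  by apply: Rmult_le_pos; [apply: pos_INR | exact: L_ge0].
have rel_part : m * (T * L) <= w i * lg.
  apply: Rmult_le_compat; [exact: umin_ge0 | | exact: Rmin_l | exact: trunc_log_logIN].
  by apply: Rmult_le_pos; [apply: pos_INR | exact: L_ge0].
have -> : m * ((A - 0) * L - (0 - T) * L) = m * (A * L) + m * (T * L) by ring.
lra.
Qed.
End DegreeConfiguration.

Lemma is_lub_epsilon (E : R -> Prop) :
  bound E -> (exists x, E x) -> is_lub E (epsilon (inhabits 0) (is_lub E)).
Proof.
move=> E_bound E_ne; apply: epsilon_spec.
by have [m m_lub] := completeness E E_bound E_ne; exists m.
Qed.

Lemma is_glb_epsilon (E : R -> Prop) :
  (exists b, forall x, E x -> b <= x) -> (exists x, E x) ->
  is_glb E (epsilon (inhabits 0) (is_glb E)).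
Proof.
move=> [b b_low] [x0 Ex0]; apply: epsilon_spec.
have negE_bound : bound (fun x => E (- x)) by exists (- b) => x /b_low; lra.
have negE_ne : exists x, E (- x) by exists (- x0); rewrite Ropp_involutive.
have [m [m_ub m_lub]] := completeness _ negE_bound negE_ne.
exists (- m); split=> [x Ex | b' b'_low].
  by have := m_ub (- x); rewrite Ropp_involutive => /(_ Ex); lra.
suff : m <= - b' by lra.
by apply: m_lub => x /b'_low; lra.
Qed.

Section MOvsAGM.
Variables (V : finType) (k n : nat) (attr : 'I_k -> {set 'I_n}).
Variable rel : 'I_k -> {set tup V n}.
Hypothesis wf : wf_query attr rel.
Hypothesis IN_gt1 : (1 < IN rel)%N.

Lemma rho_star_glb :
  is_glb (fun x => exists w : 'I_k -> R,
        (forall i, 0 <= w i) /\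
        (forall a : 'I_n, 1 <= \big[Rplus/0]_(i | a \in attr i) w i) /\
        x = \big[Rplus/0]_(i < k) (w i * logIN (IN rel) #|rel i|)) (rho_star attr rel).
Proof.
apply: is_glb_epsilon.
  exists 0 => x [w [w_ge0 [_ ->]]]; apply: sumR_ge0 => i _.
  by apply: Rmult_le_pos; [apply: w_ge0 | apply: logIN_ge0].
exists (\big[Rplus/0]_(i < k) (1 * logIN (IN rel) #|rel i|)), (fun=> 1).
split; [by move=> i; lra | split=> // a].
have [i a_in] := wf.2 a; rewrite (bigD1 i) //=.
by apply: (Rle_trans _ (1 + 0)); [lra | apply/Rplus_le_compat_l/sumR_ge0 => *; lra].
Qed.

Lemma MO_restrict_le (c : config rel) : is_config attr c ->
  MO (IN rel) attr (restrict attr c) <= rho_star attr rel + INR (k * n) * logIN (IN rel) 2.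
Proof.
move=> c_config; set K := INR (k * n) * logIN (IN rel) 2.
have [_ rho_glb] := rho_star_glb.
have feasible_le s : MO_feasible (IN rel) attr (restrict attr c) s ->
    s setT <= rho_star attr rel + K.
  move=> s_feas; suff : s setT - K <= rho_star attr rel by lra.
  apply: rho_glb => x [w [w_ge0 [w_cover ->]]].
  by have := MO_feasible_restrict_le c_config IN_gt1 s_feas w_ge0 w_cover; rewrite -/K; lra.
set E := fun x => exists s, MO_feasible (IN rel) attr (restrict attr c) s /\ x = s setT.
have E_bound : bound E by exists (rho_star attr rel + K) => x [s [/feasible_le ? ->]].
have E_ne : exists x, E x.
  exists 0, (fun=> 0); split=> //; split=> //; split=> [F F' _|i E0 A B _ _]; first lra.
  by have := logIN_ge0 IN_gt1 (dmax (proj_rel B (restrict attr c i)) A); rewrite /dlog; lra.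
have [_ MO_lub] := is_lub_epsilon E_bound E_ne.
by apply: MO_lub => x [s [/feasible_le ? ->]].
Qed.

Lemma Rpower_MO_restrict_le (c : config rel) : is_config attr c ->
  Rpower (INR (IN rel)) (MO (IN rel) attr (restrict attr c))
    <= Rpower 2 (INR (k * n)) * AGM attr rel.
Proof.
move=> c_config; have IN_ge2 : 1 <= INR (IN rel) by apply: (le_INR 1); apply/leP/ltnW.
apply: Rle_trans (Rle_Rpower _ _ _ IN_ge2 (MO_restrict_le c_config)) _.
rewrite Rpower_plus Rpower_logIN // Rmult_comm.
have -> : INR 2 = 2 by rewrite /=; lra.
exact: Rle_refl.
Qed.

Lemma card_configs_le :
  (#|[pred c : config rel | is_config attr c]|
     <= (trunc_log 2 (IN rel)).+1 ^ #|{: 'I_k * {set 'I_n}}|)%N.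
Proof.
set T := trunc_log 2 (IN rel).
pose trunc (c : config rel) : {ffun 'I_k * {set 'I_n} -> 'I_T.+1} := [ffun x => inord (c x)].
have trunc_inj : {in [pred c | is_config attr c] &, injective trunc}.
  move=> c1 c2 c1_config c2_config /ffunP eq12; apply/ffunP => x.
  have := congr1 val (eq12 x); rewrite !ffunE /= !inordK ?ltnS.
  - exact: val_inj.
  - exact: config_le_trunc_log c2_config x.
  - exact: config_le_trunc_log c1_config x.
rewrite -(card_in_image trunc_inj).
by apply: leq_trans (max_card _) _; rewrite card_ffun card_ord.
Qed.
End MOvsAGM.

Theorem theorem3p3 :
  forall k n : nat, exists (C : R) (p : nat), (0 < C) /\
    forall (V : finType) (attr : 'I_k -> {set 'I_n}) (rel : 'I_k -> {set tup V n}),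
      wf_query attr rel -> (2 <= IN rel)%N ->
      (MO_bound attr rel <= C * (ln (INR (IN rel))) ^ p * AGM attr rel).
Proof.
move=> k n; set p := #|{: 'I_k * {set 'I_n}}|.
have ln2_gt0 : 0 < ln 2 by rewrite -ln_1; apply: ln_increasing; lra.
exists (Rpower 2 (INR (k * n)) * (2 / ln 2) ^ p), p; split.
  by apply: Rmult_lt_0_compat; [apply: exp_pos | apply/pow_lt/Rdiv_lt_0_compat; lra].
move=> V attr rel wf IN_gt1; rewrite /MO_bound.
apply: Rle_trans.
  apply: sumR_le => c /andP[c_config _].
  exact: (Rpower_MO_restrict_le wf IN_gt1 c_config).
rewrite sumR_const.
have card_le : INR #|[pred c : config rel | is_config attr c && [forall i, restrict attr c i != set0]]|
    <= (2 / ln 2 * ln (INR (IN rel))) ^ p.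
  apply: Rle_trans (_ : INR ((trunc_log 2 (IN rel)).+1 ^ p) <= _).
    apply/le_INR/leP/(leq_trans _ (card_configs_le attr rel))/subset_leq_card.
    by apply/subsetP => c /andP[].
  rewrite INR_expn; apply: pow_incr; split; [exact: pos_INR | exact: INR_trunc_log2_succ_le].
have AGM_ge0 : 0 <= Rpower 2 (INR (k * n)) * AGM attr rel.
  by apply: Rmult_le_pos; left; apply: exp_pos.
apply: Rle_trans (Rmult_le_compat_r _ _ _ AGM_ge0 card_le) _.
by rewrite Rpow_mult_distr; right; ring.
Qed.
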